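(* Assume (A1)–(A3), (A6) and (A7'), and let $T\ge T_0$ (with $T_0$ from (A7')) and $T\ge3$. Work on the event $\mathcal E_T=\{\forall\,1\le s\le e\le T:\ |\widehat C(s,e)-C(s,e)|\le\lambda_T\sqrt{e-s+1}\}$. Let $\boldsymbol\tau$ be an admissible segmentation containing a segment $E=[s,e]$ that contains exactly one true change point $\tau_k$, with $s\le\tau_k<e$, such that $n_1:=\tau_k-s+1\ge\delta_T$ and $n_2:=e-\tau_k\ge\delta_T$. Let $\boldsymbol\tau'$ be the segmentation obtained from $\boldsymbol\tau$ by replacing $E$ with the two segments $[s,\tau_k]$ and $[\tau_k+1,e]$. Then $\boldsymbol\tau'$ is admissible and $L(\boldsymbol\tau')<L(\boldsymbol\tau)$.
   Context: Let $Y_1,\dots,Y_T$ be random vectors in $\mathbb R^d$ with true change points $0=\tau_0<\tau_1<\dots<\tau_K<\tau_{K+1}=T$. Let $k$ be a positive definite kernel on $\mathbb R^d$ with RKHS $\mathcal H$, feature map $\phi(y)=k(y,\cdot)$, and $\mu_P=\mathbb E_{Y\sim P}\phi(Y)$. Define $\widehat C(s,e)=\sum_{t=s}^e k(Y_t,Y_t)-\frac{1}{e-s+1}\sum_{i=s}^e\sum_{j=s}^e k(Y_i,Y_j)$ and $C(s,e)=\mathbb E[\widehat C(s,e)]$. A segmentation with $K'$ change points is $\boldsymbol\tau'=(\tau'_0,\dots,\tau'_{K'+1})$ with $0=\tau'_0<\dots<\tau'_{K'+1}=T$ and segments $[\tau'_{r-1}+1,\tau'_r]$; $L(\boldsymbol\tau')=\sum_{r=1}^{K'+1}\widehat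 C(\tau'_{r-1}+1,\tau'_r)+\beta_T K'$ for a penalty $\beta_T>0$. Let $\lambda_T=4\sqrt2\,M\sqrt{(8m+5)\log T}$. (A1) For a fixed integer $m\ge0$, $(Y_t)$ is $m$-dependent: for every $t$, $(Y_1,\dots,Y_t)$ is independent of $(Y_{t+m+1},\dots,Y_T)$; for each $k$, $(Y_t)_{\tau_{k-1}<t\le\tau_k}$ is strictly stationary with marginal $P_k$. (A2) $k$ is bounded and characteristic, $0\le k\le M<\infty$. (A3) $\Delta_k^2:=\|\mu_{P_k}-\mu_{P_{k+1}}\|_{\mathcal H}^2>0$ for $k=1,\dots,K$, and $\Delta_\star^2:=\min_k\Delta_k^2>0$. (A6) $\delta_T\asymp\sqrt{T\log T}$ and $\delta_T\le\ell_T/3$, where $\ell_T=\min_k(\tau_k-\tau_{k-1})$; a segmentation is admissible if each of its segments has length at least $\delta_T$. (A7') With $\overline B_T=(4m+2)M+\frac{(2m^2+2m)M}{\delta_T}$, there is $T_0$ such that for all $T\ge T_0$: $\frac{\delta_T}{2}\Delta_\star^2>\beta_T+3\lambda_T\sqrt T+\overline B_T$. *)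

From HB Require Import structures.
From mathcomp Require Import all_boot all_order all_algebra.
From mathcomp Require Import all_classical all_reals all_analysis.
Set Implicit Arguments. Unset Strict Implicit. Unset Printing Implicit Defensive.
Import Order.TTheory GRing.Theory Num.Theory.
Local Open Scope classical_set_scope.
Local Open Scope ring_scope.


Section Defs.
Context {R : realType} {d : nat}.
Notation X := (d.-tuple R).

Definition pos_def_kernel (k : X -> X -> R) : Prop :=
  (forall x y, k x y = k y x) /\
  (forall (n : nat) (x : 'I_n -> X) (c : 'I_n -> R),
      0 <= \sum_(i < n) \sum_(j < n) c i * c j * k (x i) (x j)).

(* <mu_P, mu_Q>_H = \int\int k(x,y) dP(x) dQ(y) *)
Definition kinner (k : X -> X -> R) (P Q : probability X R) : R :=
  fine (\int[P]_x \int[Q]_y (k x y)%:E)%E.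

Definition mmd2 (k : X -> X -> R) (P Q : probability X R) : R :=
  kinner k P P - 2 * kinner k P Q + kinner k Q Q.

Definition characteristic (k : X -> X -> R) : Prop :=
  forall P Q : probability X R, mmd2 k P Q = 0 ->
    forall A : set X, measurable A -> P A = Q A.

Context {dO : measure_display} {Omega : measurableType dO}.

Definition Chat (k : X -> X -> R) (Y : nat -> Omega -> X) (s e : nat)
    (w : Omega) : R :=
  \sum_(s <= t < e.+1) k (Y t w) (Y t w)
  - ((e - s).+1%:R)^-1 *
    \sum_(s <= i < e.+1) \sum_(s <= j < e.+1) k (Y i w) (Y j w).

Definition Cexp (P : probability Omega R) (k : X -> X -> R)
    (Y : nat -> Omega -> X) (s e : nat) : R :=
  fine (\int[P]_w (Chat k Y s e w)%:E)%E.

Definition sigma_gen (Y : nat -> Omega -> X) (I : set nat) : set (set Omega) :=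
  <<s \bigcup_(i in I) [set Y i @^-1` A | A in (@measurable _ X)] >>.

Definition indep_sigma (P : probability Omega R) (F G : set (set Omega)) : Prop :=
  forall A B, F A -> G B -> P (A `&` B) = (P A * P B)%E.

Definition m_dependent (P : probability Omega R) (Y : nat -> Omega -> X)
    (T m : nat) : Prop :=
  forall t : nat,
    indep_sigma P (sigma_gen Y [set i | (1 <= i <= t)%N])
                  (sigma_gen Y [set i | (t + m + 1 <= i <= T)%N]).

(* strict stationarity of (Y_t)_{a < t <= b}: all finite-dimensional
   distributions (evaluated on measurable rectangles) are shift invariant *)
Definition strictly_stationary_on (P : probability Omega R)
    (Y : nat -> Omega -> X) (a b : nat) : Prop :=
  forall (n : nat) (ts : 'I_n -> nat) (h : nat) (A : 'I_n -> set X),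
    (forall i, measurable (A i)) ->
    (forall i, (a < ts i <= b)%N /\ (a < ts i + h <= b)%N) ->
    P (\bigcap_(i in [set: 'I_n]) (Y (ts i + h) @^-1` A i)) =
    P (\bigcap_(i in [set: 'I_n]) (Y (ts i) @^-1` A i)).

Definition marginal_on (P : probability Omega R) (Y : nat -> Omega -> X)
    (a b : nat) (Q : probability X R) : Prop :=
  forall t, (a < t <= b)%N -> forall A : set X, measurable A ->
    P (Y t @^-1` A) = Q A.

(* a segmentation with change points c = [tau'_1; ...; tau'_K'] of {1..T}:
   0 < tau'_1 < ... < tau'_K' < T *)
Definition valid_seg (T : nat) (c : seq nat) : bool := path ltn 0 (rcons c T).

(* its segments [tau'_{r-1}+1, tau'_r], as pairs (start, end) *)
Definition segments (T : nat) (c : seq nat) : seq (nat * nat) :=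
  pairmap (fun a b => (a.+1, b)) 0 (rcons c T).

Definition admissible (delta : R) (T : nat) (c : seq nat) : bool :=
  valid_seg T c && all (fun p => delta <= ((p.2 - p.1).+1)%:R) (segments T c).

Definition Lcost (k : X -> X -> R) (Y : nat -> Omega -> X) (beta : R)
    (T : nat) (c : seq nat) (w : Omega) : R :=
  \sum_(p <- segments T c) Chat k Y p.1 p.2 w + beta * (size c)%:R.

End Defs.

Definition lambdaT {R : realType} (M : R) (m T : nat) : R :=
  4 * Num.sqrt 2 * M * Num.sqrt ((8 * m + 5)%:R * ln (T%:R)).

Definition Bbar {R : realType} (M : R) (m : nat) (deltaT : R) : R :=
  (4 * m + 2)%:R * M + (2 * m ^ 2 + 2 * m)%:R * M / deltaT.

Definition asymp_sqrt_nlogn {R : realType} (delta : nat -> R) : Prop :=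
  exists c1 c2 : R, 0 < c1 /\ 0 < c2 /\ exists N : nat, forall n, (N <= n)%N ->
    c1 * Num.sqrt (n%:R * ln n%:R) <= delta n <= c2 * Num.sqrt (n%:R * ln n%:R).

From HB Require Import structures.
From mathcomp Require Import all_boot all_order all_algebra.
From mathcomp Require Import all_classical all_reals all_analysis.
From mathcomp Require Import zify ring lra.
Import Order.TTheory GRing.Theory Num.Theory.
Local Open Scope classical_set_scope.
Local Open Scope ring_scope.
Set Implicit Arguments. Unset Strict Implicit. Unset Printing Implicit Defensive.

(* Splitting E at tau_k changes the cost by
   Chat(s, tau_k) + Chat(tau_k + 1, e) + beta_T - Chat(s, e), and on E_T each Chat
   is within lambda_T sqrt T of its mean C.  Writing C through the Gram means
   a_ij = E k(Y_i, Y_j), the drop C(s, e) - C(s, tau_k) - C(tau_k + 1, e) equals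
   S_A / n1 + S_B / n2 - (S_A + S_B + 2 S_AB) / (n1 + n2) for the block sums of a.
   By m-dependence a_ij = <mu_P, mu_Q> as soon as |i - j| > m, so each row of a
   block misses its ideal value in at most 2m + 1 entries, each by at most M;
   hence the drop is at least n1 n2 / (n1 + n2) Delta_k^2 - 2 (2m + 1) M, which is
   at least delta_T Delta_*^2 / 2 - Bbar_T, and (A7') makes the split profitable. *)

Section bounded_Rintegral.
Context {d} {T : measurableType d} {R : realType} (mu : probability T R).

Lemma bounded_integrable (f : T -> R) (c : R) :
  measurable_fun setT f -> (forall x, `|f x| <= c) ->
  mu.-integrable setT (EFin \o f).
Proof.
move=> mf fc; apply: measurable_bounded_integrable => //.
  by have := probability_setT mu; rewrite /= => ->; rewrite ltry.
exists c; split; first exact: num_real.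
by move=> y cy x _; rewrite /= ltW // (le_lt_trans (fc x) cy).
Qed.

Lemma integrable_sumr (I : eqType) (s : seq I) (f : I -> T -> R) :
  (forall i, i \in s -> mu.-integrable setT (EFin \o f i)) ->
  mu.-integrable setT (EFin \o fun x => \sum_(i <- s) f i x).
Proof.
move=> fi; have -> : EFin \o (fun x => \sum_(i <- s) f i x) =
    (fun x => \sum_(i <- s | i \in s) (f i x)%:E)%E.
  by apply/funext => x; rewrite /= -big_seq sumEFin.
exact: integrable_sum.
Qed.

Lemma Rintegral_sum (I : eqType) (s : seq I) (f : I -> T -> R) :
  (forall i, i \in s -> mu.-integrable setT (EFin \o f i)) ->
  \int[mu]_x (\sum_(i <- s) f i x) = \sum_(i <- s) \int[mu]_x f i x.
Proof.
elim: s => [_|i s IH fi].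
  by under eq_Rintegral do rewrite big_nil; rewrite Rintegral_cst //= mul0r big_nil.
have fs j : j \in s -> mu.-integrable setT (EFin \o f j).
  by move=> js; apply: fi; rewrite in_cons js orbT.
under eq_Rintegral do rewrite big_cons.
rewrite big_cons RintegralD ?IH //; first by apply: fi; rewrite mem_head.
exact: integrable_sumr.
Qed.

Lemma Rintegral_ge0_le (f : T -> R) (M : R) :
  measurable_fun setT f -> (forall x, 0 <= f x <= M) ->
  0 <= \int[mu]_x f x <= M.
Proof.
move=> mf fM; have f0 x : 0 <= f x by case/andP: (fM x).
apply/andP; split; first exact: Rintegral_ge0.
have -> : M = \int[mu]_x (cst M x).
  by rewrite Rintegral_cst //; have := probability_setT mu; rewrite /= => ->; rewrite mulr1.
apply: le_Rintegral => //.
- by apply: (bounded_integrable mf (c := M)) => x; rewrite ger0_norm //; case/andP: (fM x).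
- exact: finite_measure_integrable_cst.
- by move=> x _; case/andP: (fM x).
Qed.

End bounded_Rintegral.

Lemma sum_band_row0 (i m r : nat) :
  (\sum_(0 <= j < r) ((i <= j + m) && (j <= i + m)) = minn r (i + m).+1 - (i - m))%N.
Proof.
elim: r => [|r IH]; first by rewrite big_geq //; lia.
rewrite big_nat_recr //= IH.
by case: (boolP ((i <= r + m) && (r <= i + m))%N) => [/andP|/nandP] /=; lia.
Qed.

Lemma sum_band_row_le (i m l r : nat) :
  (\sum_(l <= j < r) ((i <= j + m) && (j <= i + m)) <= 2 * m + 1)%N.
Proof.
have [lr|rl] := leqP l r; last by rewrite big_geq // ltnW.
apply: (@leq_trans (\sum_(0 <= j < r) ((i <= j + m) && (j <= i + m)))).
  by rewrite (@big_cat_nat _ _ _ l 0 r) /= ?leq_addl.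
by rewrite sum_band_row0; lia.
Qed.

Lemma banded_block_sum_dev (R : numDomainType) (a : nat -> nat -> R) (c M : R)
    (m l1 r1 l2 r2 : nat) :
  0 <= M ->
  (forall i j, (l1 <= i < r1)%N -> (l2 <= j < r2)%N -> `|a i j - c| <= M) ->
  (forall i j, (l1 <= i < r1)%N -> (l2 <= j < r2)%N ->
     (i + m < j)%N || (j + m < i)%N -> a i j = c) ->
  `|\sum_(l1 <= i < r1) \sum_(l2 <= j < r2) a i j - ((r1 - l1) * (r2 - l2))%:R * c|
    <= (r1 - l1)%:R * ((2 * m + 1)%:R * M).
Proof.
move=> M0 near far.
have -> : \sum_(l1 <= i < r1) \sum_(l2 <= j < r2) a i j - ((r1 - l1) * (r2 - l2))%:R * c
    = \sum_(l1 <= i < r1) \sum_(l2 <= j < r2) (a i j - c).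
  under [RHS]eq_bigr => i _ do rewrite sumrB sumr_const_nat.
  by rewrite sumrB sumr_const_nat -mulrnA mulr_natl mulnC.
apply: le_trans (ler_norm_sum _ _ _) _.
rewrite mulr_natl -sumr_const_nat big_nat_cond [leRHS]big_nat_cond.
apply: ler_sum => i /andP[hi _]; apply: le_trans (ler_norm_sum _ _ _) _.
apply: (@le_trans _ _ (\sum_(l2 <= j < r2) ((i <= j + m) && (j <= i + m))%N%:R * M)).
  rewrite big_nat_cond [leRHS]big_nat_cond; apply: ler_sum => j /andP[hj _].
  case: (boolP ((i <= j + m) && (j <= i + m))%N) => [_|/nandP ij].
    by rewrite mul1r near.
  by rewrite mul0r far ?subrr ?normr0 //; apply/orP; lia.
by rewrite -mulr_suml -natr_sum ler_wpM2r // ler_nat sum_band_row_le.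
Qed.

Lemma split_gain_ge (R : realFieldType) (x1 x2 SA SB SAB k11 k22 k12 q : R) :
  0 < x1 -> 0 < x2 -> 0 <= q ->
  `|SA - x1 * x1 * k11| <= x1 * q ->
  `|SB - x2 * x2 * k22| <= x2 * q ->
  `|SAB - x1 * x2 * k12| <= x1 * q ->
  `|SAB - x1 * x2 * k12| <= x2 * q ->
  x1 * x2 / (x1 + x2) * (k11 - 2 * k12 + k22) - 2 * q <=
  SA / x1 + SB / x2 - (SA + SB + 2 * SAB) / (x1 + x2).
Proof.
move=> x10 x20 q0; rewrite !ler_norml.
set EA := SA - _; set EB := SB - _; set EC := SAB - _.
move=> /andP[lA _] /andP[lB _] /andP[_ uC1] /andP[_ uC2].
rewrite -subr_ge0.
have -> : SA / x1 + SB / x2 - (SA + SB + 2 * SAB) / (x1 + x2) -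
    (x1 * x2 / (x1 + x2) * (k11 - 2 * k12 + k22) - 2 * q) =
    (x2 * x2 * (EA + x1 * q) + x1 * x1 * (EB + x2 * q)
     + x1 * x2 * (x1 * q - EC) + x1 * x2 * (x2 * q - EC)) / (x1 * x2 * (x1 + x2)).
  by rewrite /EA /EB /EC; field; rewrite !gt_eqF ?addr_gt0.
have [eA eB eC1 eC2] : [/\ 0 <= EA + x1 * q, 0 <= EB + x2 * q,
    0 <= x1 * q - EC & 0 <= x2 * q - EC] by split; lra.
apply: divr_ge0; last by rewrite !mulr_ge0 // ltW // addr_gt0.
by rewrite !addr_ge0 // !mulr_ge0 // ltW.
Qed.

Lemma half_le_mul_div_add (R : realFieldType) (dl x1 x2 : R) :
  0 < dl -> dl <= x1 -> dl <= x2 -> dl / 2 <= x1 * x2 / (x1 + x2).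
Proof.
move=> dl0 h1 h2; rewrite -subr_ge0.
have -> : x1 * x2 / (x1 + x2) - dl / 2 =
    (x2 * (x1 - dl) + x1 * (x2 - dl)) / (2 * (x1 + x2)).
  by field; rewrite gt_eqF //; lra.
by apply: divr_ge0; [apply: addr_ge0; apply: mulr_ge0 | ]; lra.
Qed.

Lemma half_mul_le_mul_div_add (R : realFieldType) (dl x1 x2 a b : R) :
  0 < dl -> dl <= x1 -> dl <= x2 -> a <= b -> 0 <= b ->
  dl / 2 * a <= x1 * x2 / (x1 + x2) * b.
Proof.
move=> dl0 h1 h2 ab b0; apply: le_trans (ler_wpM2l _ ab) (ler_wpM2r b0 _).
  by rewrite divr_ge0 ?ltW.
exact: half_le_mul_div_add.
Qed.

Lemma sum_sym_square_split (R : pzRingType) (a : nat -> nat -> R) (s t e : nat) :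
  (s <= t <= e)%N -> (forall i j, a i j = a j i) ->
  \sum_(s <= i < e) \sum_(s <= j < e) a i j =
  \sum_(s <= i < t) \sum_(s <= j < t) a i j + \sum_(t <= i < e) \sum_(t <= j < e) a i j
  + 2 * \sum_(s <= i < t) \sum_(t <= j < e) a i j.
Proof.
move=> /andP[st te] a_sym.
have splitE (F : nat -> R) : \sum_(s <= j < e) F j = \sum_(s <= j < t) F j + \sum_(t <= j < e) F j.
  exact: big_cat_nat.
rewrite splitE; under eq_bigr do rewrite splitE; under [X in _ + X]eq_bigr do rewrite splitE.
rewrite !big_split /= [X in _ + (X + _)]exchange_big /=.
under [X in _ + (X + _)]eq_bigr do under eq_bigr do rewrite a_sym.
by rewrite mulr_natl mulr2n !addrA addrAC [X in X + _ = _]addrAC.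
Qed.

Section kernel_expectations.
Context (R : realType) (dO : measure_display) (Omega : measurableType dO)
  (P : probability Omega R) (d : nat) (k : d.-tuple R -> d.-tuple R -> R) (M : R).
Notation X := (d.-tuple R).
Hypotheses (k_meas : measurable_fun setT (fun xy : X * X => k xy.1 xy.2))
  (k_sym : forall x y, k x y = k y x) (k_bnd : forall x y, 0 <= k x y <= M).

Let k_ge0 x y : 0 <= k x y. Proof. by case/andP: (k_bnd x y). Qed.

Let M_ge0 : 0 <= M.
Proof. by case/andP: (k_bnd (nseq_tuple d 0) (nseq_tuple d 0)) => /le_trans; apply. Qed.

Definition has_law (Z : Omega -> X) (Q : probability X R) :=
  forall A, measurable A -> P (Z @^-1` A) = Q A.

Lemma kinner_product (Qa Qb : probability X R) :
  (\int[Qa \x Qb]_z (k z.1 z.2)%:E = \int[Qa]_x \int[Qb]_y (k x y)%:E)%E.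
Proof.
rewrite fubini_tonelli1 //; first exact/measurable_realfun.measurable_EFinP.
by move=> z; rewrite lee_fin k_ge0.
Qed.

Lemma kinner_sym (Qa Qb : probability X R) : kinner k Qa Qb = kinner k Qb Qa.
Proof.
rewrite /kinner (fubini_tonelli (fun xy : X * X => (k xy.1 xy.2)%:E)) //=.
  by under eq_integral do under eq_integral do rewrite k_sym.
- exact/measurable_realfun.measurable_EFinP.
- by move=> z; rewrite lee_fin k_ge0.
Qed.

Lemma kinner_ge0_le (Qa Qb : probability X R) : 0 <= kinner k Qa Qb <= M.
Proof.
rewrite /kinner -kinner_product.
by have := Rintegral_ge0_le (Qa \x Qb)%E k_meas (fun z => k_bnd z.1 z.2).
Qed.

Lemma integral_kernel_indep (Y1 Y2 : Omega -> X) (Qa Qb : probability X R) :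
  measurable_fun setT Y1 -> measurable_fun setT Y2 ->
  (forall A B, measurable A -> measurable B ->
     P (Y1 @^-1` A `&` Y2 @^-1` B) = (P (Y1 @^-1` A) * P (Y2 @^-1` B))%E) ->
  has_law Y1 Qa -> has_law Y2 Qb ->
  (\int[P]_w (k (Y1 w) (Y2 w))%:E = \int[Qa]_x \int[Qb]_y (k x y)%:E)%E.
Proof.
move=> mY1 mY2 indep lawa lawb.
have mY12 : measurable_fun setT (fun w => (Y1 w, Y2 w)) by exact: measurable_fun_pair.
rewrite -kinner_product.
rewrite (eq_measure_integral (pushforward P (fun w => (Y1 w, Y2 w)))); last first.
  move=> A mA _; apply: product_measure_unique => // B1 B2 mB1 mB2.
  by rewrite /pushforward /= -lawa // -lawb // -indep.
rewrite ge0_integral_pushforward //; first exact/measurable_realfun.measurable_EFinP.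
by move=> z _; rewrite lee_fin k_ge0.
Qed.

Variables (Y : nat -> Omega -> X) (T m : nat).
Hypothesis Y_meas : forall t, (1 <= t <= T)%N -> measurable_fun setT (Y t).

Definition gram_mean i j := \int[P]_w k (Y i w) (Y j w).

Let measurable_kY i j : (1 <= i <= T)%N -> (1 <= j <= T)%N ->
  measurable_fun setT (fun w => k (Y i w) (Y j w)).
Proof.
move=> iT jT.
by have := measurableT_comp k_meas (measurable_fun_pair (Y_meas iT) (Y_meas jT)).
Qed.

Let integrable_kY i j : (1 <= i <= T)%N -> (1 <= j <= T)%N ->
  P.-integrable setT (EFin \o fun w => k (Y i w) (Y j w)).
Proof.
move=> iT jT; apply: (bounded_integrable P (c := M) (measurable_kY iT jT)) => w.
by rewrite ger0_norm ?k_ge0 //; case/andP: (k_bnd (Y i w) (Y j w)).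
Qed.

Lemma gram_mean_ge0_le i j : (1 <= i <= T)%N -> (1 <= j <= T)%N ->
  0 <= gram_mean i j <= M.
Proof.
by move=> iT jT; have := Rintegral_ge0_le P (measurable_kY iT jT) (fun w => k_bnd (Y i w) (Y j w)).
Qed.

Lemma gram_mean_sym i j : gram_mean i j = gram_mean j i.
Proof. by apply: eq_Rintegral => w _; rewrite k_sym. Qed.

Lemma Cexp_gram_mean s e : (1 <= s)%N -> (e <= T)%N ->
  Cexp P k Y s e = \sum_(s <= t < e.+1) gram_mean t t -
    ((e - s).+1%:R)^-1 * \sum_(s <= i < e.+1) \sum_(s <= j < e.+1) gram_mean i j.
Proof.
move=> s1 eT.
have inT t : t \in index_iota s e.+1 -> (1 <= t <= T)%N by rewrite mem_index_iota; lia.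
have int_row i : i \in index_iota s e.+1 ->
    P.-integrable setT (EFin \o fun w => \sum_(s <= j < e.+1) k (Y i w) (Y j w)).
  by move=> /inT iT; apply: integrable_sumr => j /inT; exact: integrable_kY.
rewrite /Cexp -/(Rintegral P setT (Chat k Y s e)) /Chat RintegralB //; last first.
- exact: integrableZl _ _ (integrable_sumr int_row).
- by apply: integrable_sumr => t /inT tT; exact: integrable_kY.
rewrite RintegralZl //; last exact: integrable_sumr.
rewrite Rintegral_sum => [|t /inT tT]; last exact: integrable_kY.
rewrite Rintegral_sum //; congr (_ - _ * _); apply: eq_big_seq => i /inT iT.
by rewrite Rintegral_sum // => j /inT; exact: integrable_kY.
Qed.

Lemma gram_mean_indep i j (Qa Qb : probability X R) :
  m_dependent P Y T m -> (1 <= i)%N -> (i + m < j)%N -> (j <= T)%N ->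
  has_law (Y i) Qa -> has_law (Y j) Qb -> gram_mean i j = kinner k Qa Qb.
Proof.
move=> dep i1 ij jT lawa lawb.
have iT : (1 <= i <= T)%N by lia.
have jT' : (1 <= j <= T)%N by lia.
rewrite /gram_mean /Rintegral /kinner.
rewrite (integral_kernel_indep (Y_meas iT) (Y_meas jT') _ lawa lawb) //.
move=> A B mA mB; apply: (dep i).
  by apply: sub_gen_smallest; exists i; [rewrite /= leqnn i1 | exists A].
by apply: sub_gen_smallest; exists j; [rewrite /= jT andbT addn1 | exists B].
Qed.

Lemma gram_block_dev (l1 r1 l2 r2 : nat) (Q1 Q2 : probability X R) :
  m_dependent P Y T m -> (0 < l1)%N -> (0 < l2)%N -> (r1 <= T.+1)%N -> (r2 <= T.+1)%N ->
  (forall i, (l1 <= i < r1)%N -> has_law (Y i) Q1) ->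
  (forall j, (l2 <= j < r2)%N -> has_law (Y j) Q2) ->
  `|\sum_(l1 <= i < r1) \sum_(l2 <= j < r2) gram_mean i j
      - ((r1 - l1) * (r2 - l2))%:R * kinner k Q1 Q2|
    <= (r1 - l1)%:R * ((2 * m + 1)%:R * M).
Proof.
move=> dep l1_gt0 l2_gt0 r1T r2T law1 law2.
apply: banded_block_sum_dev => // i j ir jr; last first.
  case/orP=> ij; first by apply: gram_mean_indep (law1 i ir) (law2 j jr) => //; lia.
  by rewrite gram_mean_sym kinner_sym; apply: gram_mean_indep (law2 j jr) (law1 i ir) => //; lia.
have /andP[g0 gM] : 0 <= gram_mean i j <= M by apply: gram_mean_ge0_le; lia.
have /andP[c0 cM] := kinner_ge0_le Q1 Q2.
by rewrite ler_norml; apply/andP; split; lra.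
Qed.

Lemma Cexp_split_gain_ge (s t e : nat) (Q1 Q2 : probability X R) :
  m_dependent P Y T m -> (0 < s)%N -> (s <= t < e)%N -> (e <= T)%N ->
  (forall i, (s <= i <= t)%N -> has_law (Y i) Q1) ->
  (forall i, (t < i <= e)%N -> has_law (Y i) Q2) ->
  (t - s).+1%:R * (e - t)%:R / ((t - s).+1%:R + (e - t)%:R) * mmd2 k Q1 Q2
    - 2 * ((2 * m + 1)%:R * M)
  <= Cexp P k Y s e - Cexp P k Y s t - Cexp P k Y t.+1 e.
Proof.
move=> dep s_gt0 /andP[st te] eT law1 law2.
have law1' i : (s <= i < t.+1)%N -> has_law (Y i) Q1 by move=> ?; apply: law1; lia.
have law2' i : (t.+1 <= i < e.+1)%N -> has_law (Y i) Q2 by move=> ?; apply: law2; lia.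
have [t1_gt0 t1T e1T] : [/\ 0 < t.+1, t.+1 <= T.+1 & e.+1 <= T.+1]%N by split; lia.
have bA := gram_block_dev dep s_gt0 s_gt0 t1T t1T law1' law1'.
have bB := gram_block_dev dep t1_gt0 t1_gt0 e1T e1T law2' law2'.
have bC := gram_block_dev dep s_gt0 t1_gt0 t1T e1T law1' law2'.
have cross_sym : \sum_(s <= j < t.+1) \sum_(t.+1 <= i < e.+1) gram_mean i j =
    \sum_(s <= i < t.+1) \sum_(t.+1 <= j < e.+1) gram_mean i j.
  by apply: eq_bigr => i _; apply: eq_bigr => j _; apply: gram_mean_sym.
(* The cross block read by columns, which bounds it by the length [e - t] of the right part. *)
have bD := gram_block_dev dep t1_gt0 s_gt0 e1T t1T law2' law1'.
rewrite exchange_big /= cross_sym kinner_sym mulnC in bD.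
have [n1E n2E] : (t.+1 - s = (t - s).+1)%N /\ (e.+1 - t.+1 = e - t)%N by lia.
rewrite n1E n2E !natrM in bA bB bC bD.
have q_ge0 : 0 <= (2 * m + 1)%:R * M by rewrite mulr_ge0.
have x1_gt0 : 0 < (t - s).+1%:R :> R by rewrite ltr0n.
have x2_gt0 : 0 < (e - t)%:R :> R by rewrite ltr0n; lia.
apply: le_trans (split_gain_ge x1_gt0 x2_gt0 q_ge0 bA bB bC bD) _.
have nE : (e - s).+1%:R = (t - s).+1%:R + (e - t)%:R :> R.
  by rewrite -natrD; congr _%:R; lia.
have [tT n2E'] : (t <= T)%N /\ ((e - t.+1).+1 = e - t)%N by lia.
have ste : (s <= t.+1 <= e.+1)%N by lia.
rewrite !Cexp_gram_mean // nE n2E' (big_cat_nat (proj1 (andP ste)) (proj2 (andP ste))) /=.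
rewrite (sum_sym_square_split ste gram_mean_sym).
by rewrite le_eqVlt; apply/orP; left; apply/eqP; ring.
Qed.

End kernel_expectations.

Lemma path_ltn_le_last (x : nat) (p : seq nat) : path ltn x p -> (x <= last x p)%N.
Proof. by elim: p x => //= y p IH x /andP[/ltnW/leq_trans xy /IH/xy]. Qed.

Lemma bigmin_nat_le (disp : Order.disp_t) (U : orderType disp) (x0 : U) (F : nat -> U)
    (a b j : nat) :
  (a <= j < b)%N -> (\big[Order.min/x0]_(a <= i < b) F i <= F j)%O.
Proof.
move=> /andP[aj jb]; apply: le_trans (le_bigmin_nat _ _ aj jb) _.
by rewrite big_ltn // big_geq // ge_min lexx.
Qed.

Section refinement.
Variables (T : nat) (c1 c2 : seq nat).
Local Notation s := (last 0%N c1).+1.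
Local Notation e := (head T c2).
Local Notation seg := (pairmap (fun a b => (a.+1, b))).

Lemma segments_cat :
  segments T (c1 ++ c2) = seg 0%N c1 ++ (s, e) :: seg e (behead (rcons c2 T)).
Proof. by rewrite /segments rcons_cat headI pairmap_cat. Qed.

Lemma segments_insert (t : nat) :
  segments T (c1 ++ t :: c2) =
  seg 0%N c1 ++ (s, t) :: (t.+1, e) :: seg e (behead (rcons c2 T)).
Proof. by rewrite /segments rcons_cat rcons_cons headI pairmap_cat. Qed.

Lemma valid_seg_cat_head_le : valid_seg T (c1 ++ c2) -> (e <= T)%N.
Proof.
rewrite /valid_seg rcons_cat headI cat_path /= => /and3P[_ _ /path_ltn_le_last].
by rewrite -(last_cons 0%N) -headI last_rcons.
Qed.

Lemma admissible_insert (R : realType) (delta : R) (t : nat) :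
  admissible delta T (c1 ++ c2) -> (s <= t < e)%N ->
  delta <= (t - s).+1%:R -> delta <= (e - t)%:R ->
  admissible delta T (c1 ++ t :: c2).
Proof.
case/andP; rewrite /valid_seg rcons_cat headI cat_path /= => /and3P[p1 _ p2].
rewrite segments_cat => long /andP[st te] n1 n2.
rewrite /admissible /valid_seg segments_insert rcons_cat rcons_cons headI cat_path /=.
rewrite p1 p2 st te /=; move: long; rewrite !all_cat /= => /andP[-> /andP[_ ->]].
by rewrite n1 (_ : (e - t.+1).+1 = e - t)%N ?n2 //; lia.
Qed.

Lemma Lcost_insert (R : realType) (d : nat) (dO : measure_display)
    (Omega : measurableType dO) (k : d.-tuple R -> d.-tuple R -> R)
    (Y : nat -> Omega -> d.-tuple R) (beta : R) (t : nat) (w : Omega) :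
  Lcost k Y beta T (c1 ++ t :: c2) w =
  Lcost k Y beta T (c1 ++ c2) w - Chat k Y s e w
    + Chat k Y s t w + Chat k Y t.+1 e w + beta.
Proof.
rewrite /Lcost segments_insert segments_cat !big_cat !big_cons /=.
by rewrite !size_cat /= addnS mulrS; ring.
Qed.

End refinement.

Section change_points.
Variables (tau : nat -> nat) (K j0 s e : nat).
Hypotheses (tau_incr : forall j, (j <= K)%N -> (tau j < tau j.+1)%N)
  (j0K : (1 <= j0 <= K)%N) (in_seg : (s <= tau j0 <= e)%N)
  (only_j0 : forall j, (1 <= j <= K)%N -> (s <= tau j <= e)%N -> j = j0).

Lemma prev_change_point_lt : tau 0%N = 0%N -> (0 < s)%N -> (tau j0.-1 < s)%N.
Proof.
move=> tau0 s_gt0; case: (ltnP (tau j0.-1) s) => // s_le.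
have j0E : j0 = (j0.-1).+1 by lia.
have lt_prev := tau_incr (_ : j0.-1 <= K)%N; rewrite -j0E in lt_prev.
have [j1|j1] := boolP (j0.-1 == 0)%N; first by move: s_le; rewrite (eqP j1) tau0; lia.
suff : j0.-1 = j0 by lia.
by apply: only_j0; [lia | move: (lt_prev ltac:(lia)); lia].
Qed.

Lemma next_change_point_ge : (e <= tau K.+1)%N -> (e <= tau j0.+1)%N.
Proof.
move=> e_le; case: (leqP e (tau j0.+1)) => // lt_next.
have lt_j0 := tau_incr (_ : j0 <= K)%N.
have [jK|jK] := boolP (j0 == K); first by move: lt_next e_le; rewrite (eqP jK); lia.
suff : j0.+1 = j0 by lia.
by apply: only_j0; [lia | move: (lt_j0 ltac:(lia)); lia].
Qed.

End change_points.

Lemma lambdaT_ge0 (R : realType) (M : R) (m T : nat) : 0 <= M -> 0 <= lambdaT M m T.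
Proof. by move=> M0; rewrite /lambdaT !mulr_ge0 ?sqrtr_ge0. Qed.

Lemma band_bound_le_Bbar (R : realType) (M delta : R) (m : nat) :
  0 <= M -> 0 < delta -> 2 * ((2 * m + 1)%:R * M) <= Bbar M m delta.
Proof.
move=> M0 delta0; rewrite /Bbar mulrA -natrM (_ : 2 * (2 * m + 1) = 4 * m + 2)%N; last by lia.
by rewrite lerDl divr_ge0 // ?mulr_ge0 // ltW.
Qed.

Lemma Chat_split_ge (R : realType) (dO : measure_display) (Omega : measurableType dO)
    (P : probability Omega R) (d : nat) (k : d.-tuple R -> d.-tuple R -> R)
    (Y : nat -> Omega -> d.-tuple R) (T s t e : nat) (lam : R) (w : Omega) :
  0 <= lam ->
  (forall s' e', (1 <= s' <= e' <= T)%N ->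
     `|Chat k Y s' e' w - Cexp P k Y s' e'| <= lam * Num.sqrt (e' - s').+1%:R) ->
  (0 < s)%N -> (s <= t < e)%N -> (e <= T)%N ->
  Cexp P k Y s e - Cexp P k Y s t - Cexp P k Y t.+1 e - 3 * lam * Num.sqrt T%:R
  <= Chat k Y s e w - Chat k Y s t w - Chat k Y t.+1 e w.
Proof.
move=> lam0 event s_gt0 /andP[st te] eT.
have dev s' e' : (1 <= s' <= e')%N -> (e' <= T)%N ->
    `|Chat k Y s' e' w - Cexp P k Y s' e'| <= lam * Num.sqrt T%:R.
  move=> ? ?; apply: le_trans (event s' e' _) _; first lia.
  by rewrite ler_wpM2l // ler_wsqrtr // ler_nat; lia.
have := dev s e ltac:(lia) eT; rewrite ler_norml => /andP[dev_se _].
have := dev s t ltac:(lia) ltac:(lia); rewrite ler_norml => /andP[_ dev_st].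
have := dev t.+1 e ltac:(lia) eT; rewrite ler_norml => /andP[_ dev_te].
lra.
Qed.

Theorem mainTheorem9
  (R : realType) (dO : measure_display) (Omega : measurableType dO)
  (P : probability Omega R) (d : nat) (T : nat)
  (Y : nat -> Omega -> d.-tuple R)
  (K : nat) (tau : nat -> nat) (Pk : nat -> probability (d.-tuple R) R)
  (k : d.-tuple R -> d.-tuple R -> R) (M : R) (m : nat)
  (delta beta : nat -> R) (T0 : nat)
  (* the observations are random vectors in R^d *)
  (HYmeas : forall t, (1 <= t <= T)%N -> measurable_fun setT (Y t))
  (* true change points 0 = tau_0 < tau_1 < ... < tau_K < tau_{K+1} = T *)
  (Htau0 : tau 0%N = 0%N) (HtauK : tau K.+1 = T)
  (Htau_incr : forall j, (j <= K)%N -> (tau j < tau j.+1)%N)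
  (* (A1) *)
  (HA1dep : m_dependent P Y T m)
  (HA1stat : forall j, (1 <= j <= K.+1)%N ->
     strictly_stationary_on P Y (tau j.-1) (tau j) /\
     marginal_on P Y (tau j.-1) (tau j) (Pk j))
  (* (A2) *)
  (Hk_meas : measurable_fun setT (fun xy : d.-tuple R * d.-tuple R => k xy.1 xy.2))
  (Hk_pd : pos_def_kernel k) (Hk_char : characteristic k)
  (Hk_bnd : forall x y, 0 <= k x y <= M)
  (* (A3) *)
  (HA3 : forall j, (1 <= j <= K)%N -> 0 < mmd2 k (Pk j) (Pk j.+1))
  (* (A6) *)
  (Hdelta_pos : forall n, 0 < delta n)
  (Hdelta_rate : asymp_sqrt_nlogn delta)
  (HA6 : forall j, (j <= K)%N -> delta T <= ((tau j.+1 - tau j)%N)%:R / 3)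
  (* (A7') with Delta_*^2 = min_k Delta_k^2 *)
  (HA7 : forall n, (T0 <= n)%N ->
     delta n / 2 *
       \big[Num.min/mmd2 k (Pk 1%N) (Pk 2%N)]_(1 <= j < K.+1)
          mmd2 k (Pk j) (Pk j.+1)
     > beta n + 3 * lambdaT M m n * Num.sqrt (n%:R) + Bbar M m (delta n))
  (HT0 : (T0 <= T)%N) (HT3 : (3 <= T)%N)
  (* the segmentation tau = c1 ++ c2, admissible, containing E = [s, e] *)
  (c1 c2 : seq nat)
  (Hadm : admissible (delta T) T (c1 ++ c2))
  (j0 : nat) (Hj0 : (1 <= j0 <= K)%N) :
  let s := (last 0%N c1).+1 in
  let e := head T c2 in
  (* E contains exactly one true change point, tau_{j0}, with s <= tau_{j0} < e *)
  (s <= tau j0 < e)%N ->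
  (forall j, (1 <= j <= K)%N -> (s <= tau j <= e)%N -> j = j0) ->
  delta T <= ((tau j0 - s).+1)%:R ->
  delta T <= ((e - tau j0)%N)%:R ->
  forall w : Omega,
    (* the event E_T *)
    (forall s' e' : nat, (1 <= s' <= e' <= T)%N ->
       `|Chat k Y s' e' w - Cexp P k Y s' e'|
         <= lambdaT M m T * Num.sqrt (((e' - s').+1)%:R)) ->
    admissible (delta T) T (c1 ++ tau j0 :: c2) /\
    Lcost k Y (beta T) T (c1 ++ tau j0 :: c2) w
      < Lcost k Y (beta T) T (c1 ++ c2) w.
Proof.
move=> s e j0_in only_j0 n1_ge n2_ge w event.
have [s_le lt_e] := andP j0_in.
have e_le_T : (e <= T)%N by case/andP: Hadm => /valid_seg_cat_head_le.
split; first exact: admissible_insert.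
rewrite Lcost_insert -/s -/e.
have M_ge0 : 0 <= M by case/andP: (Hk_bnd (nseq_tuple d 0) (nseq_tuple d 0)) => /le_trans; apply.
have j0_seg : (s <= tau j0 <= e)%N by rewrite s_le ltnW.
have prev_lt_s := prev_change_point_lt Htau_incr Hj0 j0_seg only_j0 Htau0 (ltn0Sn _).
have e_le_last : (e <= tau K.+1)%N by rewrite HtauK.
have e_le_next := next_change_point_ge Htau_incr Hj0 j0_seg only_j0 e_le_last.
have law1 i : (s <= i <= tau j0)%N -> has_law P (Y i) (Pk j0).
  by move=> ?; apply: (proj2 (HA1stat j0 _)); lia.
have law2 i : (tau j0 < i <= e)%N -> has_law P (Y i) (Pk j0.+1).
  by move=> ?; apply: (proj2 (HA1stat j0.+1 _)) => //=; lia.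
have gain := Cexp_split_gain_ge Hk_meas (proj1 Hk_pd) Hk_bnd HYmeas HA1dep (ltn0Sn _)
  j0_in e_le_T law1 law2.
have noise := Chat_split_ge (lambdaT_ge0 m T M_ge0) event (ltn0Sn _) j0_in e_le_T.
rewrite -/s in gain noise.
have j0_lt : (1 <= j0 < K.+1)%N by lia.
have min_le := bigmin_nat_le (mmd2 k (Pk 1%N) (Pk 2%N))
  (fun j => mmd2 k (Pk j) (Pk j.+1)) j0_lt.
have := half_mul_le_mul_div_add (Hdelta_pos T) n1_ge n2_ge min_le (ltW (HA3 j0 Hj0)).
have := band_bound_le_Bbar m M_ge0 (Hdelta_pos T).
have := HA7 T HT0.
lra.
Qed.
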